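(* Let $q$ be a prime power, $e\ge 2$, $r$ a positive integer, $a\in\mathbb{F}_{q^e}$ with $a\neq 0$, $f(x)=x^r(x^{q-1}+a)$, and $\ell=q^{e-1}+\cdots+q+1$. If $r\bmod \ell\neq hq+1$ for every integer $h$, then $f(x)$ does not permute $\mathbb{F}_{q^e}$.
   Context: $r\bmod\ell$ denotes the least nonnegative residue of $r$ modulo $\ell$. *)

From mathcomp Require Import all_boot all_order all_algebra all_field.
Set Implicit Arguments. Unset Strict Implicit. Unset Printing Implicit Defensive.

Definition prime_power (q : nat) : Prop :=
  exists p k : nat, prime p /\ (0 < k)%N /\ q = (p ^ k)%N.

Definition ell (q e : nat) : nat := (\sum_(i < e) q ^ i)%N.

From mathcomp Require Import all_boot all_order all_algebra all_field.
From mathcomp Require Import cyclic zify.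
Set Implicit Arguments. Unset Strict Implicit. Unset Printing Implicit Defensive.
Import GRing.Theory.

(* If f permutes F then \sum_x f(x)^s = \sum_x x^s for every s.  Take
   s = P - 1 with P = q^(e-1), so that s = (q-1)K and #|F| - 1 = (q-1)L for
   K = ell q (e-1) and L = ell q e = qK + 1.  The right-hand side vanishes
   because L does not divide K.  In characteristic p we have
   (y + a)^(P-1) = \sum_(i < P) y^i (-a)^(P-1-i), so the left-hand side is
   - \sum (-a)^(P-1-i) over the i < P with L | rK + i; the hypothesis on
   r mod L makes exactly one such i exist, hence the left-hand side is nonzero. *)

Lemma expn_gt1 p n : 1 < p -> 0 < n -> 1 < p ^ n.
Proof. by move=> p_gt1 n_gt0; rewrite -[1](expn0 p) ltn_exp2l. Qed.

Lemma ell_recl q n : ell q n.+1 = q * ell q n + 1.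
Proof.
rewrite /ell big_ord_recl expn0 big_distrr addnC /=.
by congr (_ + _); apply: eq_bigr => i _; rewrite expnS.
Qed.

Lemma ell_recr q n : ell q n.+1 = ell q n + q ^ n.
Proof. by rewrite /ell big_ord_recr. Qed.

Lemma ell_gt0 q n : 0 < n -> 0 < ell q n.
Proof. by case: n => // n _; rewrite ell_recl addn1. Qed.

Lemma ell_geometric q n : 0 < q -> (q - 1) * ell q n + 1 = q ^ n.
Proof.
move=> q_gt0; elim: n => [|n IHn]; first by rewrite /ell big_ord0 muln0.
by rewrite ell_recr expnS mulnDr addnAC IHn; nia.
Qed.

Lemma dvdn_shift_exists q K r : 1 < q -> 0 < K -> r %% (q * K + 1) %% q != 1 ->
  exists2 j, j < (q - 1) * K + 1 & q * K + 1 %| r * K + j.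
Proof.
(* As qK = -1 mod qK + 1, writing r mod (qK + 1) = uq + v gives rK = vK - u;
   take j = u if v = 0, and j = qK + 1 + u - vK if v >= 2. *)
move=> q_gt1 K_gt0.
have [L_gt0 q_gt0] : 0 < q * K + 1 /\ 0 < q by lia.
have r_eq := divn_eq r (q * K + 1); have R_lt := ltn_pmod r L_gt0.
move: (r %/ _) (r %% _) r_eq R_lt => d R -> R_lt.
have R_eq := divn_eq R q; have v_lt := ltn_pmod R q_gt0.
move: (R %/ q) (R %% q) R_eq v_lt => u v R_eq v_lt v_neq1.
rewrite {}R_eq in R_lt *.
have u_le : u <= K by nia.
have [v0 | v_gt0] := posnP v.
  exists u; first nia.
  by apply/dvdnP; exists (d * K + u); rewrite v0; nia.
have u_lt : u < K by nia.
exists (q * K + 1 + u - v * K); first nia.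
by apply/dvdnP; exists (d * K + u + 1); nia.
Qed.

Lemma dvdn_shift_uniq L m i j : i < L -> j < L -> L %| m + j ->
  (L %| m + i) = (i == j).
Proof.
move=> i_lt j_lt mj_dvd; apply/idP/eqP => [mi_dvd | -> //].
apply/eqP; rewrite -(modn_small i_lt) -(modn_small j_lt) -(eqn_modDl m).
by move: mi_dvd mj_dvd; rewrite /dvdn => /eqP-> /eqP->.
Qed.

Lemma dvdn_shift_exists_uniq q K P r : 1 < q -> 0 < K -> P + K = q * K + 1 ->
  r %% (q * K + 1) %% q != 1 ->
  exists j : 'I_P, forall i : 'I_P, (q * K + 1 %| r * K + i) = (i == j).
Proof.
move=> q_gt1 K_gt0 PK_eq r_mod; have [j j_lt j_dvd] := dvdn_shift_exists q_gt1 K_gt0 r_mod.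
have j_ltP : j < P by lia.
exists (Ordinal j_ltP) => i; have i_lt := ltn_ord i.
by rewrite (dvdn_shift_uniq _ _ j_dvd) //; lia.
Qed.

Lemma modn_neq1 m q : (forall h : int, (m%:Z != h * q%:Z + 1)%R) -> m %% q != 1.
Proof.
move=> m_neq; apply/eqP => m_mod; move/eqP: (m_neq (m %/ q)%N); apply.
by rewrite {1}(divn_eq m q) m_mod PoszD PoszM.
Qed.

Local Open Scope ring_scope.

Section FinFieldPowerSums.

Variable F : finFieldType.

Let card_pred_gt0 : (0 < #|F|.-1)%N.
Proof. by rewrite -subn1 subn_gt0 finNzRing_gt1. Qed.

Lemma natf_card : #|F|%:R = 0 :> F.
Proof.
apply: (@addrI _ (\sum_(x : F) x)); rewrite addr0 [in RHS](reindex_inj (addIr 1)) /=.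
by rewrite big_split /= sumr_const.
Qed.

Lemma expf_card_pred (x : F) : x != 0 -> x ^+ #|F|.-1 = 1.
Proof.
move=> x_nz; apply: (mulfI x_nz).
by rewrite -exprS prednK ?expf_card ?mulr1 // ltnW // finNzRing_gt1.
Qed.

Lemma finField_prim_root : exists z : F, (#|F|.-1).-primitive_root z.
Proof.
have rs_root : all (#|F|.-1).-unity_root (enum (predC1 (0 : F)%R)).
  by apply/allP => x; rewrite mem_enum unity_rootE => /expf_card_pred ->.
have rs_size : (#|F|.-1 <= size (enum (predC1 (0 : F)%R)))%N.
  by rewrite -cardE cardC1.
by have /hasP[z _ z_prim] := has_prim_root card_pred_gt0 rs_root (enum_uniq _) rs_size; exists z.
Qed.

Lemma sum_expr_finField n : (0 < n)%N ->
  \sum_(x : F) x ^+ n = if (#|F|.-1 %| n)%N then -1 else 0.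
Proof.
move=> n_gt0; case: ifPn => [/dvdnP[c n_eq] | n_ndvd].
  rewrite (bigD1 0) //= expr0n gtn_eqF // add0r.
  rewrite (eq_bigr (fun=> 1)) => [|x x_nz]; last first.
    by rewrite n_eq mulnC exprM expf_card_pred ?expr1n.
  rewrite sumr_const (eq_card (B := predC1 0)) // cardC1.
  by apply/eqP; rewrite -addr_eq0 -mulrSr prednK ?natf_card //; exact/ltnW/finNzRing_gt1.
have [z z_prim] := finField_prim_root.
have zn_neq1 : z ^+ n != 1 by rewrite -(prim_order_dvd z_prim).
have z_nz : z != 0.
  apply: contra_eq_neq (prim_expr_order z_prim) => ->.
  by rewrite expr0n gtn_eqF // eq_sym oner_eq0.
have /eqP : \sum_(x : F) x ^+ n = z ^+ n * \sum_(x : F) x ^+ n.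
  rewrite mulr_sumr (reindex_inj (mulfI z_nz)) /=.
  by apply: eq_bigr => x _; rewrite exprMn.
rewrite -subr_eq0 -{1}[\sum_(x : F) _]mul1r -mulrBl mulf_eq0 subr_eq0.
by rewrite eq_sym (negbTE zn_neq1) => /eqP.
Qed.

End FinFieldPowerSums.

Lemma exprD_pchar_pred (R : idomainType) p n (x y : R) : p \in [pchar R] ->
  (x + y) ^+ (p ^ n)%N.-1 = \sum_(i < p ^ n) x ^+ i * (- y) ^+ ((p ^ n).-1 - i)%N.
Proof.
move=> pR; case: n => [|n]; first by rewrite expn0 big_ord1 !expr0 mulr1.
set P := (p ^ n.+1)%N.
have P_gt1 : (1 < P)%N by rewrite expn_gt1 // prime_gt1 // (pcharf_prime pR).
have P_gt0 : (0 < P)%N by apply: ltnW.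
have P_pchar : [pchar R].-nat P.
  by rewrite (eq_pnat _ (pcharf_eq pR)) pnatX pnat_id // (pcharf_prime pR).
have [xy0 | xy_nz] := eqVneq (x + y) 0.
  have -> : - y = x by apply/esym/eqP; rewrite -addr_eq0 xy0.
  have /eqP P0 : P%:R == 0 :> R by rewrite -(dvdn_pcharf pR) /P expnS dvdn_mulr.
  rewrite xy0 expr0n gtn_eqF ?ltn_predRL //.
  rewrite (eq_bigr (fun=> x ^+ P.-1)) => [|i _]; last first.
    by rewrite -exprD subnKC // -ltnS prednK.
  by rewrite sumr_const card_ord -[in RHS]mulr_natr P0 mulr0.
apply: (mulfI xy_nz); rewrite -exprS prednK // exprDn_pchar //.
rewrite -[y ^+ P]opprK -exprNn_pchar // -opprB subrXX -mulNr opprB opprK.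
by congr (_ * _); apply: eq_bigr => i _; rewrite mulrC.
Qed.

Lemma sum_expr_binomial_finField (F : finFieldType) p n d K L r (a : F) :
  p \in [pchar F] -> (0 < d)%N -> (0 < K)%N -> (0 < r)%N ->
  (p ^ n).-1%N = (d * K)%N -> #|F| = (d * L).+1%N ->
  \sum_(x : F) (x ^+ r * (x ^+ d + a)) ^+ (p ^ n)%N.-1
    = - \sum_(i < p ^ n | (L %| r * K + i)%N) (- a) ^+ ((p ^ n).-1 - i)%N.
Proof.
move=> pF d_gt0 K_gt0 r_gt0 P_eq card_eq.
under eq_bigr => x _ do rewrite exprMn exprD_pchar_pred // mulr_sumr.
rewrite exchange_big -sumrN [RHS]big_mkcond /=; apply: eq_bigr => i _.
have -> : \sum_(x : F) x ^+ r ^+ (p ^ n).-1 * ((x ^+ d) ^+ i * (- a) ^+ ((p ^ n).-1 - i))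
    = (- a) ^+ ((p ^ n).-1 - i) * \sum_(x : F) x ^+ (d * (r * K + i)).
  rewrite mulr_sumr; apply: eq_bigr => x _.
  by rewrite mulrCA mulrC -!exprM mulrAC -exprD mulrC P_eq mulnDr mulnCA.
rewrite sum_expr_finField; last by rewrite muln_gt0 d_gt0 addn_gt0 muln_gt0 r_gt0 K_gt0.
by rewrite card_eq /= dvdn_pmul2l //; case: ifP; rewrite ?mulrN1 ?mulr0 ?oppr0.
Qed.

Theorem proposition4p1 (F : finFieldType) (q e r : nat) (a : F) :
  prime_power q -> #|F| = (q ^ e)%N -> (2 <= e)%N -> (0 < r)%N -> a != 0 ->
  (forall h : int, ((r %% ell q e)%N)%:Z != h * (q%:Z) + 1) ->
  ~ bijective (fun x : F => x ^+ r * (x ^+ (q - 1) + a)).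
Proof.
case: e => [//|e] [p [k [p_prime [k_gt0 q_eq]]]] card_eq e_gt0 r_gt0 a_nz r_mod.
move=> /bij_inj f_inj; set K := ell q e; set P := (p ^ (k * e))%N.
have q_gt1 : (1 < q)%N by rewrite q_eq expn_gt1 // prime_gt1.
have pF : p \in [pchar F].
  by apply: (@card_finPcharP _ _ (k * e.+1)); rewrite // card_eq q_eq expnM.
have K_gt0 : (0 < K)%N by rewrite ell_gt0.
have L_eq : ell q e.+1 = (q * K + 1)%N by rewrite ell_recl.
have P_eq : P = (q ^ e)%N by rewrite /P expnM -q_eq.
have PK_eq : (P + K = q * K + 1)%N by rewrite P_eq -L_eq ell_recr addnC.
have P1_eq : (P.-1 = (q - 1) * K)%N.
  by rewrite P_eq -(ell_geometric _ (ltnW q_gt1)) addn1.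
have cardF_eq : #|F| = ((q - 1) * (q * K + 1)).+1%N.
  by rewrite card_eq -L_eq -(ell_geometric _ (ltnW q_gt1)) addn1.
rewrite L_eq in r_mod.
have [j j_uniq] := dvdn_shift_exists_uniq q_gt1 K_gt0 PK_eq (modn_neq1 r_mod).
have : \sum_(x : F) x ^+ P.-1 = \sum_(x : F) (x ^+ r * (x ^+ (q - 1) + a)) ^+ P.-1.
  exact: reindex_inj f_inj.
rewrite (sum_expr_binomial_finField _ pF _ K_gt0 r_gt0 P1_eq cardF_eq) ?subn_gt0 //.
rewrite (big_pred1 j j_uniq) sum_expr_finField; last by rewrite P1_eq muln_gt0 subn_gt0 q_gt1.
rewrite cardF_eq /= P1_eq dvdn_pmul2l ?subn_gt0 // gtnNdvd //; last by nia.
by move=> /eqP; rewrite eq_sym oppr_eq0 expf_eq0 oppr_eq0 (negbTE a_nz) andbF.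
Qed.
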